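(* For every integer $n>2$, the number of pairs $(s,t)\in S_n\times S_n$ such that $[s,t]=sts^{-1}t^{-1}$ is a $3$-cycle and $s$ is a cycle (of some length $k\in\{2,\dots,n\}$, i.e. a single cycle together with fixed points) equals $$\#\mathcal{B}_2(n)=\frac{1}{24}(n-1)(n-2)(n^2+5n+12)\,n!.$$
   Context: Permutations compose as functions. *)

From mathcomp Require Import all_boot all_fingroup.
Set Implicit Arguments. Unset Strict Implicit. Unset Printing Implicit Defensive.
Local Open Scope group_scope.

(* Convention: in mathcomp, (s * t) x = t (s x).  The paper composes as
   functions, so its [s,t] = s o t o s^-1 o t^-1 is, in mathcomp,
   t^-1 * s^-1 * t * s. *)
Definition commf (n : nat) (s t : 'S_n) : 'S_n := t^-1 * s^-1 * t * s.

Definition psupp (n : nat) (s : 'S_n) : {set 'I_n} := [set x | s x != x].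

Definition is_cycle (n : nat) (s : 'S_n) : bool :=
  (#|[set O in porbits s | (1 < #|O|)%N]| == 1)%N.

Definition is_kcycle (n k : nat) (s : 'S_n) : bool :=
  is_cycle s && (#|psupp s| == k)%N.

Definition B2 (n : nat) : {set 'S_n * 'S_n} :=
  [set p | is_kcycle 3 (commf p.1 p.2) & is_cycle p.1].

(* For a k-cycle s we have [s, t] = (s^-1) ^ t * s, and t |-> (s^-1) ^ t is
   #|'C[s]|-to-one onto the k-cycles, which form a single conjugacy class.
   Substituting v = c * s^-1 and conjugating s^-1 to the standard k-cycle
   sg = (0 1 ... k-1), the number of good t is #|'C[s]| * G(k), where G(k) is
   the number of 3-cycles c such that c * sg is again a k-cycle.  Summing
   #|'C[s]| over the class of k-cycles gives n!, so the k-cycles contribute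
   n! * G(k) pairs.

   G(k) is computed by classifying the 3-cycles c: counting moved points
   shows that either c runs through three points of [0, k) in increasing
   order ('C(k, 3) cycles), or c = (x, sg q, q) with x >= k and q < k
   ((n - k) * k cycles); every other 3-cycle breaks sg apart.  Finally
   24 * sum_(k = 2..n) ('C(k, 3) + (n - k) * k) = (n-1)(n-2)(n^2+5n+12). *)

From mathcomp Require Import all_boot all_fingroup zify.
Set Implicit Arguments. Unset Strict Implicit. Unset Printing Implicit Defensive.
Local Open Scope group_scope.

Section CycleStructure.
Variable n : nat.
Implicit Types (s w : 'S_n) (x y : 'I_n).

Lemma porbit_fix s x : s x = x -> porbit s x = [set x].
Proof.
move=> sx; apply/setP=> y; rewrite inE; apply/porbitP/eqP => [[i ->]|->].
  by rewrite permX_fix.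
by exists 0; rewrite expg0 perm1.
Qed.

Lemma porbit_succ s x : porbit s (s x) = porbit s x.
Proof. by have := porbit_perm s 1 x; rewrite expg1. Qed.

Lemma moved_porbit s x y : s x != x -> y \in porbit s x -> s y != y.
Proof.
move=> sx /porbitP[i ->]; apply: contra sx => /eqP sy.
by apply/eqP/(@perm_inj _ (s ^+ i)); rewrite -permM -expgS expgSr permM sy.
Qed.

Lemma card_porbit_gt1 s x : (1 < #|porbit s x|) = (s x != x).
Proof.
have [sx|sx] := eqVneq (s x) x; first by rewrite porbit_fix // cards1.
have sub: [set x; s x] \subset porbit s x.
  apply/subsetP=> y; rewrite !inE => /orP[]/eqP->; first exact: porbit_id.
  by rewrite -(porbit_succ s x) porbit_id.
by apply: leq_trans (subset_leq_card sub); rewrite cards2 eq_sym sx.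
Qed.

Lemma nontrivial_porbitsE s :
  [set O in porbits s | 1 < #|O|] = porbit s @: psupp s.
Proof.
apply/setP=> O; rewrite inE; apply/andP/imsetP => [[/imsetP[x _ ->]]|[x]].
  by rewrite card_porbit_gt1 => sx; exists x; rewrite // inE.
by rewrite inE => sx ->; split; [apply: imset_f | rewrite card_porbit_gt1].
Qed.

Lemma is_cycleP s :
  reflect (exists2 x, s x != x & forall y, s y != y -> y \in porbit s x)
          (is_cycle s).
Proof.
rewrite /is_cycle nontrivial_porbitsE.
apply: (iffP cards1P) => [[O EO]|[x sx Hx]].
  have /imsetP[x] : O \in porbit s @: psupp s by rewrite EO set11.
  rewrite inE => sx defO; exists x => // y sy.
  have : porbit s y \in porbit s @: psupp s by apply: imset_f; rewrite inE.
  by rewrite EO inE defO => /eqP <-; apply: porbit_id.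
exists (porbit s x); apply/setP => O; rewrite inE.
apply/imsetP/eqP => [[y sy ->]|->]; last by exists x; rewrite ?inE.
by rewrite inE in sy; apply/eqP; rewrite eq_porbit_mem Hx.
Qed.

Lemma cycle_supp_porbit s : is_cycle s -> exists2 x, s x != x & porbit s x = psupp s.
Proof.
case/is_cycleP=> x sx Hx; exists x => //; apply/setP=> y; rewrite inE.
by apply/idP/idP; [exact: moved_porbit | exact: Hx].
Qed.

Lemma kcycle_intro w k (P : {set 'I_n}) x0 :
  (forall y, (w y != y) = (y \in P)) -> #|P| = k -> x0 \in P ->
  (forall y, y \in P -> porbit w y = porbit w x0) -> is_kcycle k w.
Proof.
move=> suppP cardP x0P orbP; apply/andP; split.
  apply/is_cycleP; exists x0; first by rewrite suppP.
  by move=> y; rewrite suppP => yP; rewrite -(orbP y yP) porbit_id.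
suff ->: psupp w = P by rewrite cardP.
by apply/setP=> y; rewrite inE suppP.
Qed.

Lemma cycle_same_porbit w : is_cycle w ->
  forall x y, w x != x -> w y != y -> y \in porbit w x.
Proof.
case/is_cycleP=> z wz Hz x y wx wy.
suff ->: porbit w x = porbit w z by exact: Hz.
by apply/eqP; rewrite eq_porbit_mem Hz.
Qed.

Lemma porbit_sub_stable w (I : {set 'I_n}) x :
  (forall y, y \in I -> w y \in I) -> x \in I -> porbit w x \subset I.
Proof.
move=> stableI xI; apply/subsetP => y /porbitP[i ->]; rewrite permX.
by elim: i => //= i IH; apply: stableI.
Qed.

Lemma porbit_interval w (lo hi : nat) :
  (forall z : 'I_n, lo <= z < hi -> (w z : nat) = z.+1) ->
  forall y z : 'I_n, lo <= y -> y <= z -> z <= hi -> porbit w y = porbit w z.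
Proof.
move=> succw y z; move e: (z - y) => m.
elim: m y e => [|m IH] y e loy yz zhi; first by congr porbit; apply: ord_inj; lia.
by rewrite -porbit_succ; apply: IH; rewrite ?succw; lia.
Qed.

End CycleStructure.

Section Invariance.
Variable n : nat.
Implicit Types (s g : 'S_n) (x y : 'I_n).

Lemma porbitJ s g x y : (g y \in porbit (s ^ g) (g x)) = (y \in porbit s x).
Proof.
apply/porbitP/porbitP => [[i Hi]|[i ->]]; last by exists i; rewrite -conjXg permJ.
by exists i; apply: (@perm_inj _ g); rewrite Hi -conjXg permJ.
Qed.

Lemma movedJ s g x : ((s ^ g) (g x) != g x) = (s x != x).
Proof. by rewrite permJ (inj_eq perm_inj). Qed.

Lemma movedV s x : (s^-1 x != x) = (s x != x).
Proof. by rewrite -{2}(permK s x) (inj_eq perm_inj) eq_sym. Qed.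

Lemma is_cycleJ s g : is_cycle s -> is_cycle (s ^ g).
Proof.
case/is_cycleP=> x sx Hx; apply/is_cycleP; exists (g x); first by rewrite movedJ.
by move=> y; rewrite -[y](permKV g) movedJ porbitJ; exact: Hx.
Qed.

Lemma psuppJ s g : psupp (s ^ g) = g @: psupp s.
Proof.
apply/setP=> y; rewrite -[y](permKV g) inE movedJ (mem_imset _ _ perm_inj).
by rewrite inE.
Qed.

Lemma is_kcycleJ k s g : is_kcycle k (s ^ g) = is_kcycle k s.
Proof.
rewrite /is_kcycle psuppJ card_imset; last exact: perm_inj.
congr (_ && _); apply/idP/idP; last exact: is_cycleJ.
by move/(is_cycleJ g^-1); rewrite conjgK.
Qed.

Lemma is_kcycleV k s : is_kcycle k s^-1 = is_kcycle k s.
Proof.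
rewrite /is_kcycle.
suff cycV (t : 'S_n) : is_cycle t -> is_cycle t^-1.
  have ->: psupp s^-1 = psupp s by apply/setP=> y; rewrite !inE movedV.
  by congr (_ && _); apply/idP/idP => /cycV; rewrite ?invgK.
case/is_cycleP=> x tx Hx; apply/is_cycleP; exists x; first by rewrite movedV.
by move=> y; rewrite movedV porbitV; exact: Hx.
Qed.

Lemma kcycle_bounds k s : is_kcycle k s -> 1 < k <= n.
Proof.
case/andP=> /cycle_supp_porbit[x sx Ex] /eqP <-.
rewrite -Ex card_porbit_gt1 sx /= Ex.
by apply: leq_trans (max_card _) _; rewrite card_ord.
Qed.

End Invariance.

Lemma card_below n m : m <= n -> #|[set i : 'I_n | i < m]| = m.
Proof.
move=> mn; have ->: [set i : 'I_n | i < m] = widen_ord mn @: [set: 'I_m].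
  apply/setP=> i; rewrite inE; apply/idP/imsetP => [im|[[j jm] _ ->]] //.
  by exists (Ordinal im) => //; apply: ord_inj.
by rewrite card_imset ?cardsT ?card_ord // => i j /(congr1 val) /= /ord_inj.
Qed.

Section StandardCycle.
Variable n : nat.

Definition std_succ (k i : nat) : nat :=
  if i < k then (if i.+1 == k then 0 else i.+1) else i.

(* Restricted to m = minn k n <= n, std_succ m maps 'I_n injectively into
   itself, so it defines a permutation of 'I_n. *)
Lemma std_succ_lt k (i : 'I_n) : std_succ (minn k n) i < n.
Proof. by have := ltn_ord i; rewrite /std_succ; case: ifP => ?; [case: eqP|]; lia. Qed.

Definition std_fun (k : nat) (i : 'I_n) : 'I_n := insubd i (std_succ (minn k n) i).

Lemma std_fun_inj k : injective (std_fun k).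
Proof.
move=> i j /(congr1 val); rewrite !val_insubd !std_succ_lt /std_succ => eqij.
apply: ord_inj; move: eqij.
by case: ifP => ?; [case: eqP|]; case: ifP => ?; try case: eqP; lia.
Qed.

(* The standard k-cycle of 'S_n (the identity when k <= 1; truncated at n). *)
Definition stdcycle (k : nat) : 'S_n := perm (@std_fun_inj k).

Variable k : nat.
Hypothesis k_gt1 : 1 < k.
Hypothesis k_le_n : k <= n.
Local Notation sg := (stdcycle k).

Lemma std_funE (i : 'I_n) : (std_fun k i : nat) = std_succ k i.
Proof. by rewrite val_insubd std_succ_lt (minn_idPl k_le_n). Qed.

Lemma stdcycleE (i : 'I_n) : (sg i : nat) = std_succ k i.
Proof. by rewrite permE std_funE. Qed.

Lemma stdcycle_succ (i : 'I_n) : i.+1 < k -> (sg i : nat) = i.+1.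
Proof. by move=> ik; rewrite stdcycleE /std_succ ifT ?ifF //; lia. Qed.

Lemma stdcycle_last (i : 'I_n) : i.+1 = k -> (sg i : nat) = 0.
Proof. by move=> ik; rewrite stdcycleE /std_succ ifT ?ifT //; lia. Qed.

Lemma stdcycle_out (i : 'I_n) : k <= i -> sg i = i.
Proof. by move=> ki; apply: ord_inj; rewrite stdcycleE /std_succ ifF //; lia. Qed.

Lemma stdcycle_below (i : 'I_n) : i < k -> sg i < k.
Proof. by move=> ik; rewrite stdcycleE /std_succ ik; case: eqP; lia. Qed.

Lemma stdcycle_moved (i : 'I_n) : (sg i != i) = (i < k).
Proof.
apply/idP/idP => [|ik]; first by apply: contraR => /negbTE ki; rewrite stdcycle_out // leqNgt ki.
by apply/eqP => /(congr1 (@nat_of_ord _)); rewrite stdcycleE /std_succ ik; case: eqP; lia.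
Qed.

Lemma stdcycle_kcycle : is_kcycle k sg.
Proof.
have n_gt0 : 0 < n by lia.
apply: (@kcycle_intro _ _ _ [set i : 'I_n | i < k] (Ordinal n_gt0)).
- by move=> y; rewrite stdcycle_moved inE.
- exact: card_below.
- by rewrite inE /=; lia.
move=> y; rewrite inE => yk; symmetry; apply: (@porbit_interval _ _ 0 k.-1) => //=; try lia.
by move=> z zk; rewrite stdcycle_succ //; lia.
Qed.

(* Every k-cycle is conjugate to the standard one: number the points of its
   orbit 0, ..., k-1 in cyclic order and the fixed points k, ..., n-1. *)
Lemma kcycle_conj_std s : is_kcycle k s -> exists g, sg ^ g = s.
Proof.
case/andP=> /cycle_supp_porbit[x0 sx0 Ox0] /eqP cardP.
have cardO : #|porbit s x0| = k by rewrite Ox0.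
set C := ~: psupp s.
have cardC : #|C| = n - k by rewrite /C cardsCs setCK card_ord cardP.
set L := traject s x0 k ++ enum C.
have sizeL : size L = n by rewrite size_cat size_traject -cardE cardC; lia.
have uniqL : uniq L.
  rewrite cat_uniq enum_uniq andbT -{1}cardO uniq_traject_porbit /=.
  apply/hasPn => y; rewrite mem_enum /C inE => yC.
  by rewrite -cardO -porbit_traject Ox0.
have nthL (i : 'I_n) :
    nth x0 L i = if i < k then iter i s x0 else nth x0 (enum C) (i - k).
  by rewrite nth_cat size_traject; case: ifP => // ?; rewrite nth_traject.
pose g (i : 'I_n) := nth x0 L i.
have g_inj : injective g.
  by move=> i j /eqP; rewrite /g nth_uniq ?sizeL // => /eqP/ord_inj.
exists (perm g_inj); apply/permP => y.
rewrite -[y](permKV (perm g_inj)); set i := (perm g_inj)^-1 y.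
rewrite permJ !permE /g !nthL std_funE /std_succ.
have [ik|ki] := ltnP i k.
  case: eqP => [iSk|iSk]; last by rewrite ifT ?iterS //; lia.
  by rewrite ifT /=; [rewrite -iterS iSk -cardO iter_porbit | lia].
rewrite ifF; last lia.
have : nth x0 (enum C) (i - k) \in C.
  by rewrite -mem_enum mem_nth // -cardE cardC; have := ltn_ord i; lia.
by rewrite /C !inE negbK => /eqP ->.
Qed.

End StandardCycle.

Section ThreeCycles.
Variable n : nat.
Implicit Types (a b d y : 'I_n) (c : 'S_n).

(* The 3-cycle a -> b -> d -> a. *)
Definition cyc3 a b d : 'S_n := tperm a b * tperm a d.

Section Values.
Variables a b d : 'I_n.
Hypotheses (ab : a != b) (bd : b != d) (ad : a != d).

Lemma cyc3a : cyc3 a b d a = b.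
Proof using ab bd ad. by rewrite permM tpermL tpermD // eq_sym. Qed.
Lemma cyc3b : cyc3 a b d b = d.
Proof using ab bd ad. by rewrite permM tpermR tpermL. Qed.
Lemma cyc3d : cyc3 a b d d = a.
Proof using ab bd ad. by rewrite permM (tpermD ad bd) tpermR. Qed.
Lemma cyc3_out y : y != a -> y != b -> y != d -> cyc3 a b d y = y.
Proof using ab bd ad. by move=> ya yb yd; rewrite permM !tpermD // eq_sym. Qed.

End Values.

Section Rotation.
Variables a b d : 'I_n.
Hypotheses (ab : a != b) (bd : b != d) (ad : a != d).

Lemma cyc3_rot : cyc3 a b d = cyc3 b d a.
Proof.
have [ba db da] : [/\ b != a, d != b & d != a] by split; rewrite eq_sym.
apply/permP=> y.
have [->|ya] := eqVneq y a; first by rewrite (cyc3a ab bd ad) (cyc3d bd da ba).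
have [->|yb] := eqVneq y b; first by rewrite (cyc3b ab bd ad) (cyc3a bd da ba).
have [->|yd] := eqVneq y d; first by rewrite (cyc3d ab bd ad) (cyc3b bd da ba).
by rewrite (cyc3_out ab bd ad) // (cyc3_out bd da ba).
Qed.

Lemma cyc3_moved y : (cyc3 a b d y != y) = (y \in [set a; b; d]).
Proof.
rewrite !inE.
have [->|ya] := eqVneq y a; first by rewrite (cyc3a ab bd ad) eq_sym ab.
have [->|yb] := eqVneq y b; first by rewrite (cyc3b ab bd ad) eq_sym bd orbT.
have [->|yd] := eqVneq y d; first by rewrite (cyc3d ab bd ad) ad orbT.
by rewrite (cyc3_out ab bd ad) // eqxx.
Qed.

Lemma cyc3_kcycle : is_kcycle 3 (cyc3 a b d).
Proof.
apply: (@kcycle_intro _ _ _ [set a; b; d] a cyc3_moved).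
- by rewrite -setUA cardsU1 cards2 bd !inE negb_or ab ad.
- by rewrite !inE eqxx.
have Ob : porbit (cyc3 a b d) b = porbit (cyc3 a b d) a.
  by rewrite -(porbit_succ _ a) (cyc3a ab bd ad).
move=> y; rewrite !inE => /orP[/orP[]|]/eqP-> //.
by rewrite -(porbit_succ _ d) (cyc3d ab bd ad).
Qed.

End Rotation.

Lemma kcycle3_cyc3 c x : is_kcycle 3 c -> c x != x ->
  [/\ x != c x, c x != c (c x), x != c (c x) & c = cyc3 x (c x) (c (c x))].
Proof.
case/andP=> cyc_c /eqP card3 cx.
have [x0 _ O0] := cycle_supp_porbit cyc_c.
have Ox : porbit c x = psupp c.
  by rewrite -O0; apply/eqP; rewrite eq_porbit_mem O0 inE.
have cardO : #|porbit c x| = 3 by rewrite Ox.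
have := uniq_traject_porbit c x; rewrite cardO /= !inE negb_or andbT.
case/andP=> /andP[xb xd] bd.
have cdx : c (c (c x)) = x by have := iter_porbit c x; rewrite cardO.
split => //; apply/permP => y.
have [->|yx] := eqVneq y x; first by rewrite cyc3a.
have [->|yb] := eqVneq y (c x); first by rewrite cyc3b.
have [->|yd] := eqVneq y (c (c x)); first by rewrite cyc3d.
have yO : y \notin porbit c x.
  by rewrite porbit_traject cardO /= !inE (negbTE yx) (negbTE yb) (negbTE yd).
by rewrite (cyc3_out xb bd xd) //; apply/eqP/negbNE; move: yO; rewrite Ox inE.
Qed.

End ThreeCycles.

Lemma neq_ord n (x y : 'I_n) : (x : nat) != y -> x != y.
Proof. by apply: contra => /eqP ->. Qed.

Lemma card_split3 n (A : {set 'I_n}) (a b d : 'I_n) : a != b -> b != d -> a != d ->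
  #|A| = (a \in A) + (b \in A) + (d \in A) + #|A :\ a :\ b :\ d|.
Proof.
move=> ab bd ad.
rewrite (cardsD1 a) (cardsD1 b (A :\ a)) (cardsD1 d (A :\ a :\ b)) !inE.
by rewrite ![_ == a]eq_sym ![d == b]eq_sym (negbTE ab) (negbTE bd) (negbTE ad) !addnA.
Qed.

Lemma moved_balance n (c s : 'S_n) (a b d : 'I_n) : a != b -> b != d -> a != d ->
  (forall y, y != a -> y != b -> y != d -> c y = y) ->
  #|psupp (c * s)| = #|psupp s| ->
  (a \in psupp (c * s)) + (b \in psupp (c * s)) + (d \in psupp (c * s)) =
  (a \in psupp s) + (b \in psupp s) + (d \in psupp s).
Proof.
move=> ab bd ad c_out; rewrite (card_split3 (psupp (c * s)) ab bd ad).
rewrite [in RHS](card_split3 (psupp s) ab bd ad).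
suff -> : psupp (c * s) :\ a :\ b :\ d = psupp s :\ a :\ b :\ d by move/addIn.
apply/setP=> y; rewrite !inE.
have [//|yd] := eqVneq y d; have [//|yb] := eqVneq y b; have [//|ya] := eqVneq y a.
by rewrite permM c_out.
Qed.

Section ProductWithStdCycle.
Variables n k : nat.
Hypothesis k_gt1 : 1 < k.
Hypothesis k_le_n : k <= n.
Local Notation sg := (stdcycle n k).
Local Notation orb w := (porbit w).

Lemma predk_lt_n : k.-1 < n. Proof. lia. Qed.
Let last_pt : 'I_n := Ordinal predk_lt_n.

Lemma sorted_cyc3_values (a b d : 'I_n) : a < b -> b < d -> d < k ->
  let w := cyc3 a b d * sg in
  [/\ (w a : nat) = b.+1, (w d : nat) = a.+1,
      (w b : nat) = (if d.+1 == k then 0 else d.+1) &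
      forall y : 'I_n, (y : nat) != a -> (y : nat) != b -> (y : nat) != d -> w y = sg y].
Proof.
move=> ab bd dk w.
have [nab nbd nad] : [/\ a != b, b != d & a != d] by split; apply: neq_ord; lia.
split; first by rewrite permM cyc3a // stdcycle_succ //; lia.
- by rewrite permM cyc3d // stdcycle_succ //; lia.
- by rewrite permM cyc3b // stdcycleE // /std_succ ifT.
by move=> y ya yb yd; rewrite permM cyc3_out //; apply: neq_ord.
Qed.

(* A 3-cycle on three points a < b < d of the standard cycle, in increasing
   order, merges with it into one k-cycle:
   0 .. a -> b+1 .. d -> a+1 .. b -> d+1 .. k-1 -> 0. *)
Lemma sorted_cyc3_good (a b d : 'I_n) :
  a < b -> b < d -> d < k -> is_kcycle k (cyc3 a b d * sg).
Proof.
move=> ab bd dk; have [wa wd wb wo] := sorted_cyc3_values ab bd dk.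
set w := cyc3 a b d * sg in wa wd wb wo *.
have succw lo hi : a < lo \/ hi <= a -> b < lo \/ hi <= b -> d < lo \/ hi <= d ->
    hi < k -> forall z : 'I_n, lo <= z < hi -> (w z : nat) = z.+1.
  by move=> ha hb hd hk z hz; rewrite wo ?stdcycle_succ //; lia.
apply: (@kcycle_intro _ _ _ _ a _ (card_below k_le_n)).
- move=> y; rewrite inE -val_eqE /=.
  have [->|ya] := eqVneq y a; first by rewrite wa; apply/idP/idP; lia.
  have [->|yb] := eqVneq y b; first by rewrite wb; case: ifP => ?; apply/idP/idP; lia.
  have [->|yd] := eqVneq y d; first by rewrite wd; apply/idP/idP; lia.
  rewrite wo ?stdcycleE // /std_succ; try by rewrite val_eqE.
  by case: ifP => ?; try case: ifP => ?; apply/idP/idP; lia.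
- by rewrite inE; lia.
have seg1 (y : 'I_n) : y <= a -> orb w y = orb w a.
  by move=> ya; apply: (porbit_interval (succw 0 a _ _ _ _)); lia.
have seg2 (y : 'I_n) : a < y <= b -> orb w y = orb w b.
  by move=> hy; apply: (porbit_interval (succw a.+1 b _ _ _ _)); lia.
have seg3 (y : 'I_n) : b < y <= d -> orb w y = orb w d.
  by move=> hy; apply: (porbit_interval (succw b.+1 d _ _ _ _)); lia.
have seg4 (y : 'I_n) : d < y < k -> orb w y = orb w last_pt.
  by move=> hy; apply: (porbit_interval (succw d.+1 k.-1 _ _ _ _)) => /=; lia.
have Edb : orb w d = orb w b by rewrite -porbit_succ seg2 // wd; lia.
have Elast : d.+1 < k -> orb w last_pt = orb w a.
  by move=> dk1; rewrite -porbit_succ seg1 // wo ?stdcycle_last /last_pt //=; lia.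
have Eba : orb w b = orb w a.
  rewrite -porbit_succ; move: wb; case: ifP => dk1 wb; first by rewrite seg1 // wb.
  by rewrite seg4 ?Elast // ?wb; lia.
move=> y; rewrite inE => yk.
have [ya|ay] := leqP y a; first exact: seg1.
have [yb|bY] := leqP y b; first by rewrite seg2 ?Eba //; lia.
have [yd|dy] := leqP y d; first by rewrite seg3 ?Edb ?Eba //; lia.
by rewrite seg4 ?Elast //; lia.
Qed.

(* A 3-cycle x -> sg q -> q -> x with x outside the standard cycle: the point
   sg q becomes fixed and x takes its place, giving the k-cycle
   q -> x -> sg (sg q) -> ... -> q. *)
Lemma straddling_cyc3_good (x q : 'I_n) :
  k <= x -> q < k -> is_kcycle k (cyc3 x (sg q) q * sg).
Proof.
move=> kx qk; set p := sg q.
have pk : p < k by apply: stdcycle_below.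
have pE : (p : nat) = if q.+1 == k then 0 else q.+1 by rewrite /p stdcycleE // /std_succ qk.
have [nxp npq nxq] : [/\ x != p, p != q & x != q].
  by split; [apply: neq_ord; lia | rewrite /p stdcycle_moved | apply: neq_ord; lia].
set w := cyc3 x p q * sg.
have wx : w x = sg p by rewrite permM cyc3a.
have wp : w p = p by rewrite permM cyc3b.
have wq : w q = x by rewrite permM cyc3d // stdcycle_out.
have wo (y : 'I_n) : (y : nat) != x -> (y : nat) != p -> (y : nat) != q -> w y = sg y.
  by move=> yx yp yq; rewrite permM cyc3_out //; apply: neq_ord.
apply: (@kcycle_intro _ _ _ (x |: ([set i : 'I_n | i < k] :\ p)) q).
- move=> y; rewrite !inE.
  have spk : sg p < k by apply: stdcycle_below.
  have [->|yx] := eqVneq y x; first by rewrite wx; apply: neq_ord; lia.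
  have [->|yp] := eqVneq y p; first by rewrite wp eqxx.
  have [->|yq] := eqVneq y q; first by rewrite wq nxq qk.
  by rewrite wo ?stdcycle_moved // val_eqE.
- have := cardsD1 p [set i : 'I_n | i < k]; rewrite card_below // inE pk => cardk.
  by rewrite cardsU1 !inE (negbTE nxp) ltnNge kx [RHS]cardk.
- by rewrite !inE qk andbT (eq_sym q p) npq orbT.
have Ex : porbit w x = porbit w q by rewrite -wq porbit_succ.
move=> y; rewrite !inE => /orP[/eqP->//|/andP[yp yk]].
have ypn : (y : nat) != p by rewrite val_eqE.
have succw lo hi : p < lo \/ hi <= p -> q < lo \/ hi <= q -> hi < k ->
    forall z : 'I_n, lo <= z < hi -> (w z : nat) = z.+1.
  by move=> hp hq hk z hz; rewrite wo; [rewrite stdcycle_succ // | ..]; lia.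
case: eqP pE => qlast pE.
  by apply: (@porbit_interval _ w 1 q); try lia; apply: succw; lia.
have segq (y' : 'I_n) : y' <= q -> porbit w y' = porbit w q.
  by move=> hy; apply: (porbit_interval (succw 0 q _ _ _)); lia.
have [yq|qy] := leqP y q; first exact: segq.
rewrite (porbit_interval (succw p.+1 k.-1 _ _ _) (y := y) (z := last_pt)) /=; try lia.
by rewrite -porbit_succ wo /last_pt //=; try lia; apply: segq; rewrite stdcycle_last //=; lia.
Qed.

(* The 3-cycle x -> z -> y -> x with x < y < z inside the standard cycle
   splits it: the orbit of y stays in (x, y], so it misses x. *)
Lemma reversed_cyc3_bad (x y z : 'I_n) : x < y -> y < z -> z < k ->
  let w := cyc3 x z y * sg in w x != x -> w y != y -> ~~ is_kcycle k w.
Proof.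
move=> xy yz zk w wx wy.
have [nxz nzy nxy] : [/\ x != z, z != y & x != y] by split; apply: neq_ord; lia.
apply/negP => /andP[/cycle_same_porbit/(_ y x wy wx) xOy _].
have : porbit w y \subset [set u : 'I_n | x < u <= y].
  apply: porbit_sub_stable; last by rewrite inE; lia.
  move=> u; rewrite !inE => xuy.
  have [->|uy] := eqVneq u y; first by rewrite permM cyc3d // stdcycle_succ //=; lia.
  move: uy; rewrite -val_eqE /= => uy.
  by rewrite permM cyc3_out ?stdcycle_succ //; try apply: neq_ord; lia.
by move/subsetP/(_ x xOy); rewrite inE; lia.
Qed.

Lemma fixed_by_product (c : 'S_n) y :
  c y != y -> ~~ ((c * sg) y != y) -> (y < k) && (c y < k).
Proof.
rewrite permM => cy /negPn/eqP sgcy.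
have cyk : c y < k.
  by rewrite ltnNge; apply: contra cy => kcy; rewrite -{2}sgcy stdcycle_out.
by rewrite cyk andbT -sgcy; apply: stdcycle_below.
Qed.

Lemma moved_patterns (ma mb md ia ib id : bool) :
  ma + mb + md = ia + ib + id ->
  (~~ ma -> ia && ib) -> (~~ mb -> ib && id) -> (~~ md -> id && ia) ->
  [\/ [&& ia, ib, id, ma, mb & md], [&& ia, ib, ~~ id & ~~ ma],
       [&& ~~ ia, ib, id & ~~ mb] | [&& ia, ~~ ib, id & ~~ md]].
Proof.
case: ma; case: mb; case: md; case: ia; case: ib; case: id => //= _ fa fb fd;
  by [constructor 1 | constructor 2 | constructor 3 | constructor 4 |
      move: (fa isT) | move: (fb isT) | move: (fd isT)].
Qed.

Lemma inside_sorted (a b d : 'I_n) : a != b -> b != d -> a != d ->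
  a < k -> b < k -> d < k ->
  (cyc3 a b d * sg) a != a -> (cyc3 a b d * sg) b != b -> (cyc3 a b d * sg) d != d ->
  is_kcycle k (cyc3 a b d * sg) ->
  exists a' b' d' : 'I_n, [/\ a' < b', b' < d', d' < k & cyc3 a b d = cyc3 a' b' d'].
Proof.
move=> ab bd ad ak bk dk wa wb wd ck.
wlog amin : a b d ab bd ad ak bk dk wa wb wd ck / (a < b) && (a < d).
  move=> sorted_from_min.
  have [vab vbd vad] : [/\ (a : nat) != b, (b : nat) != d & (a : nat) != d] by [].
  have [ba db da] : [/\ b != a, d != b & d != a] by split; rewrite eq_sym.
  have [amin|namin] := boolP ((a < b) && (a < d)); first exact: sorted_from_min.
  have [bmin|nbmin] := boolP ((b < d) && (b < a)).
    by rewrite (cyc3_rot ab bd ad) in wa wb wd ck *; exact: sorted_from_min.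
  have dmin : (d < a) && (d < b) by lia.
  rewrite (cyc3_rot ab bd ad) (cyc3_rot bd da ba) in wa wb wd ck *.
  exact: sorted_from_min.
case/andP: amin => lt_ab lt_ad.
have [lt_bd|lt_db|eq_bd] := ltngtP b d; first by exists a, b, d.
  by rewrite (negbTE (reversed_cyc3_bad lt_ad lt_db bk wa wd)) in ck.
by move: bd; rewrite (ord_inj eq_bd) eqxx.
Qed.

Lemma good_cyc3_shapes c : is_kcycle 3 c -> is_kcycle k (c * sg) ->
  (exists a b d : 'I_n, [/\ a < b, b < d, d < k & c = cyc3 a b d]) \/
  (exists x q : 'I_n, [/\ k <= x, q < k & c = cyc3 x (sg q) q]).
Proof.
move=> c3 ck; have [a ca _] := cycle_supp_porbit (proj1 (andP c3)).
have [ab bd ad ec] := kcycle3_cyc3 c3 ca; rewrite ec in ck *.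
move: (c a) (c (c a)) ab bd ad ck => b d ab bd ad ck {ec c c3 ca}.
have [ba db da] : [/\ b != a, d != b & d != a] by split; rewrite eq_sym.
have balance := moved_balance (s := sg) ab bd ad (cyc3_out ab bd ad).
have card_sg : #|psupp sg| = k by case/andP: (stdcycle_kcycle k_gt1 k_le_n) => _ /eqP.
rewrite card_sg (eqP (proj2 (andP ck))) !inE !stdcycle_moved // in balance.
have fixA := @fixed_by_product (cyc3 a b d) a; rewrite cyc3a // in fixA.
have fixB := @fixed_by_product (cyc3 a b d) b; rewrite cyc3b // in fixB.
have fixD := @fixed_by_product (cyc3 a b d) d; rewrite cyc3d // in fixD.
have rot1 := cyc3_rot ab bd ad; have rot2 := cyc3_rot bd da ba.
case: (moved_patterns (balance erefl) (fixA ba) (fixB db) (fixD ad)).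
- case/and5P=> ak bk dk wa /andP[wb wd]; left; exact: inside_sorted.
- case/and4P=> _ bk; rewrite -leqNgt => kd /negPn/eqP; rewrite permM cyc3a // => sgb.
  by right; exists d, b; rewrite sgb rot1 rot2.
- case/and4P; rewrite -leqNgt => ka _ dk /negPn/eqP; rewrite permM cyc3b // => sgd.
  by right; exists a, d; rewrite sgd.
case/and4P=> ak; rewrite -leqNgt => kb _ /negPn/eqP; rewrite permM cyc3d // => sga.
by right; exists b, a; rewrite sga rot1.
Qed.

End ProductWithStdCycle.

Section IncreasingTuples.
Variable n : nat.

Definition incr_pairs (m : nat) :=
  [set p : 'I_n * 'I_n | (p.1 < p.2) && (p.2 < m)].
Definition incr_triples (m : nat) :=
  [set p : 'I_n * 'I_n * 'I_n | [&& p.1.1 < p.1.2, p.1.2 < p.2 & p.2 < m]].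

(* Increasing pairs and triples below m <= n are counted by 'C(m, 2) and
   'C(m, 3): split off those whose last entry is m - 1. *)
Lemma card_incr_pairs m : m <= n -> #|incr_pairs m| = 'C(m, 2).
Proof.
elim: m => [|m IH] lt_mn.
  by apply/eqP; rewrite cards_eq0; apply/eqP/setP => -[a b]; rewrite !inE /=; lia.
pose om : 'I_n := Ordinal lt_mn.
have -> : incr_pairs m.+1 = incr_pairs m :|: [set (a, om) | a in [set i : 'I_n | i < m]].
  apply/setP => -[a b]; rewrite !inE /=; apply/idP/orP.
    case/andP => ab; rewrite ltnS leq_eqVlt => /orP[/eqP bm|bm]; last by left; rewrite ab.
    right; apply/imsetP; exists a; first by rewrite inE -bm.
    by congr pair; apply: ord_inj.
  case=> [/andP[ab bm]|/imsetP[a' a'm [-> ->]]]; first by rewrite ab; lia.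
  by rewrite inE in a'm; rewrite /om /= a'm ltnSn.
rewrite cardsU IH ?(ltnW lt_mn) // card_imset; last by move=> x y [].
rewrite card_below ?(ltnW lt_mn) //.
have -> : incr_pairs m :&: [set (a, om) | a in [set i : 'I_n | i < m]] = set0.
  apply/setP => -[a b]; rewrite !inE; apply/negP => /andP[/andP[_ bm] /imsetP[a' _ [_ e]]].
  by move: bm; rewrite e /= ltnn.
by rewrite cards0 subn0 binS bin1.
Qed.

Lemma card_incr_triples m : m <= n -> #|incr_triples m| = 'C(m, 3).
Proof.
elim: m => [|m IH] lt_mn.
  by apply/eqP; rewrite cards_eq0; apply/eqP/setP => -[[a b] d]; rewrite !inE /=; lia.
pose om : 'I_n := Ordinal lt_mn.
have -> : incr_triples m.+1 = incr_triples m :|: [set (p, om) | p in incr_pairs m].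
  apply/setP => -[[a b] d]; rewrite !inE /=; apply/idP/orP.
    case/and3P => ab bd; rewrite ltnS leq_eqVlt => /orP[/eqP dm|dm].
      right; apply/imsetP; exists (a, b); first by rewrite inE /= ab -dm.
      by congr pair; apply: ord_inj.
    by left; rewrite ab bd.
  case=> [/and3P[ab bd dm]|/imsetP[[a' b'] a'b' [-> -> ->]]]; first by rewrite ab bd; lia.
  by rewrite inE /= in a'b'; case/andP: a'b' => -> -> /=.
rewrite cardsU IH ?(ltnW lt_mn) // card_imset; last by move=> x y [].
rewrite card_incr_pairs ?(ltnW lt_mn) //.
have -> : incr_triples m :&: [set (p, om) | p in incr_pairs m] = set0.
  apply/setP => -[[a b] d]; rewrite !inE; apply/negP => /andP[/and3P[_ _ dm] /imsetP[p _ [_ e]]].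
  by move: dm; rewrite e /= ltnn.
by rewrite cards0 subn0 binS.
Qed.

End IncreasingTuples.

Definition good_cyc3 n (k : nat) (s : 'S_n) :=
  [set c : 'S_n | is_kcycle 3 c && is_kcycle k (c * s)].

Section GoodThreeCycles.
Variables n k : nat.
Hypothesis k_gt1 : 1 < k.
Hypothesis k_le_n : k <= n.
Local Notation sg := (stdcycle n k).

Definition straddling_pairs := [set p : 'I_n * 'I_n | (k <= p.1) && (p.2 < k)].

Definition sorted_cyc3 (p : 'I_n * 'I_n * 'I_n) : 'S_n := cyc3 p.1.1 p.1.2 p.2.
Definition straddling_cyc3 (p : 'I_n * 'I_n) : 'S_n := cyc3 p.1 (sg p.2) p.2.

Lemma neq_incr (a b : 'I_n) : a < b -> a != b.
Proof. by move=> ab; apply: neq_ord; lia. Qed.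

Lemma straddling_neq (x q : 'I_n) : k <= x -> q < k ->
  [/\ x != sg q, sg q != q & x != q].
Proof.
move=> kx qk; have : sg q < k by apply: stdcycle_below.
by split; [apply: neq_ord; lia | rewrite stdcycle_moved | apply: neq_ord; lia].
Qed.

Lemma good_cyc3E :
  good_cyc3 k sg = sorted_cyc3 @: incr_triples n k :|: straddling_cyc3 @: straddling_pairs.
Proof.
apply/setP => c; rewrite !inE; apply/idP/orP.
  case/andP=> c3 ck; case: (good_cyc3_shapes k_gt1 k_le_n c3 ck).
    case=> a [b [d [ab bd dk ->]]]; left; apply/imsetP; exists (a, b, d) => //.
    by rewrite inE /= ab bd dk.
  by case=> x [q [kx qk ->]]; right; apply/imsetP; exists (x, q); rewrite ?inE /= ?kx.
case=> /imsetP[].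
  move=> [[a b] d]; rewrite inE /= => /and3P[ab bd dk] ->.
  have ad : a < d by lia.
  by rewrite /sorted_cyc3 cyc3_kcycle ?neq_incr // sorted_cyc3_good.
move=> [x q]; rewrite inE /= => /andP[kx qk] ->.
have [xp pq xq] := straddling_neq kx qk.
by rewrite /straddling_cyc3 cyc3_kcycle // straddling_cyc3_good.
Qed.

(* Both families are injectively parametrized: a sorted 3-cycle determines
   its least point a (the minimum of its support), hence b and d; a straddling
   one determines x (its only moved point >= k), hence sg q and q. *)
Lemma sorted_cyc3_inj : {in incr_triples n k &, injective sorted_cyc3}.
Proof.
move=> [[a b] d] [[a' b'] d']; rewrite !inE /sorted_cyc3 /=.
move=> /and3P[ab bd dk] /and3P[ab' bd' dk'] e.
have [nab nbd nad] : [/\ a != b, b != d & a != d] by split; apply: neq_incr; lia.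
have [nab' nbd' nad'] : [/\ a' != b', b' != d' & a' != d'] by split; apply: neq_incr; lia.
have supp_eq y : (y \in [set a; b; d]) = (y \in [set a'; b'; d']).
  by rewrite -cyc3_moved // e cyc3_moved.
have : a <= a' /\ a' <= a.
  have := supp_eq a; have := supp_eq a'; rewrite !inE !eqxx /=.
  by move=> /orP[/orP[]|]/eqP/(congr1 (@nat_of_ord n)) e1
            /esym/orP[/orP[]|]/eqP/(congr1 (@nat_of_ord n)) e2; lia.
case=> le_aa' le_a'a; have ea : a = a' by apply: ord_inj; lia.
subst a'; have eb : b = b' by rewrite -(cyc3a nab nbd nad) e cyc3a.
by subst b'; rewrite -(cyc3b nab nbd nad) e cyc3b.
Qed.

Lemma straddling_cyc3_inj : {in straddling_pairs &, injective straddling_cyc3}.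
Proof.
move=> [x q] [x' q']; rewrite !inE /straddling_cyc3 /= => /andP[kx qk] /andP[kx' qk'] e.
have [xp pq xq] := straddling_neq kx qk.
have [xp' pq' xq'] := straddling_neq kx' qk'.
have pk' : sg q' < k by apply: stdcycle_below.
have ex : x = x'.
  have := cyc3_moved xp pq xq x; rewrite e cyc3_moved // !inE eqxx /=.
  by case/orP=> [/orP[]|] /eqP // /(congr1 (@nat_of_ord n)); lia.
subst x'; congr pair; apply/(@perm_inj _ sg).
by rewrite -(cyc3a xp pq xq) e cyc3a.
Qed.

(* A sorted 3-cycle moves only points of [0, k), a straddling one moves x >= k. *)
Lemma sorted_straddling_disjoint :
  sorted_cyc3 @: incr_triples n k :&: straddling_cyc3 @: straddling_pairs = set0.
Proof.
apply/setP => c; rewrite !inE; apply/negP.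
case/andP=> /imsetP[[[a b] d] + ->] /imsetP[[x q] + e].
rewrite !inE /= => /and3P[ab bd dk] /andP[kx qk].
have [xp pq xq] := straddling_neq kx qk.
have [nab nbd nad] : [/\ a != b, b != d & a != d] by split; apply: neq_incr; lia.
have := cyc3_moved xp pq xq x; rewrite -/(straddling_cyc3 (x, q)) -e cyc3_moved //.
by rewrite !inE eqxx /= => /orP[/orP[]|] /eqP /(congr1 (@nat_of_ord n)); lia.
Qed.

Lemma card_straddling_pairs : #|straddling_pairs| = ((n - k) * k)%N.
Proof.
have -> : straddling_pairs = setX (~: [set i : 'I_n | i < k]) [set i : 'I_n | i < k].
  by apply/setP => -[x q]; rewrite !inE -leqNgt.
by rewrite cardsX cardsCs setCK card_ord card_below.
Qed.

Lemma card_good_cyc3 : #|good_cyc3 k sg| = ('C(k, 3) + (n - k) * k)%N.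
Proof.
rewrite good_cyc3E cardsU sorted_straddling_disjoint cards0 subn0.
rewrite (card_in_imset sorted_cyc3_inj) (card_in_imset straddling_cyc3_inj).
by rewrite card_incr_triples // card_straddling_pairs.
Qed.

End GoodThreeCycles.

Section ConjugacyCounting.
Variable n : nat.
Implicit Types (u v s t g : 'S_n).
Local Notation G := [set: 'S_n].

Lemma conj_fixed_cent u g : (u ^ g == u) = (g \in 'C[u]).
Proof.
apply/eqP/cent1P => [e|c]; first by rewrite /commute -{1}e conjgE mulKVg.
by rewrite conjgE -c mulKg.
Qed.

Lemma card_conj_preimage u (Q : pred 'S_n) :
  #|[set t | Q (u ^ t)]| = (#|'C[u]| * #|[set v in u ^: G | Q v]|)%N.
Proof.
rewrite -sum1_card (partition_big (fun t => u ^ t) (mem [set v in u ^: G | Q v])).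
  rewrite mulnC -sum_nat_const; apply: eq_bigr => v; rewrite !inE.
  case/andP=> /imsetP[t0 _ ->] Qv.
  rewrite sum1dep_card -(card_rcoset _ t0); apply: eq_card => t.
  rewrite !inE mem_rcoset -conj_fixed_cent conjgM (can2_eq (conjgKV t0) (conjgK t0)).
  by case: eqP => [->|] /=; rewrite ?Qv ?andbF.
by move=> t; rewrite !inE => Qt; rewrite imset_f ?inE.
Qed.

Lemma sum_cent_class u : (\sum_(v in u ^: G) #|'C[v]|)%N = n`!.
Proof.
rewrite (eq_bigr (fun=> #|'C[u]|)); last by move=> _ /imsetP[g _ ->]; rewrite cent1J cardJg.
rewrite sum_nat_const -index_cent1 setTI mulnC Lagrange ?subsetT //.
by rewrite cardsT card_Sn.
Qed.

Lemma cent1V u : 'C[u^-1] = 'C[u].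
Proof.
apply/setP => g; apply/cent1P/cent1P => [/commuteV|]; last exact: commuteV.
by rewrite invgK.
Qed.

Definition kcycles k := [set s : 'S_n | is_kcycle k s].

Lemma kcycle_class k s : is_kcycle k s -> s ^: G = kcycles k.
Proof.
move=> ks; have /andP[k_gt1 k_le_n] := kcycle_bounds ks.
have [g <-] := kcycle_conj_std k_gt1 k_le_n ks.
apply/setP => v; rewrite inE; apply/imsetP/idP => [[h _ ->]|kv].
  by rewrite !is_kcycleJ stdcycle_kcycle.
have [h <-] := kcycle_conj_std k_gt1 k_le_n kv.
by exists (g^-1 * h); rewrite ?inE // conjgM conjgK.
Qed.

Lemma card_good_cyc3J k s g : #|good_cyc3 k (s ^ g)| = #|good_cyc3 k s|.
Proof.
rewrite -[RHS](card_imset _ (conjg_inj g)); apply: eq_card => c; rewrite inE.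
apply/andP/imsetP => [[c3 ck]|[c' + ->]].
  exists (c ^ g^-1); last by rewrite conjgKV.
  by rewrite !inE is_kcycleJ c3 -(is_kcycleJ _ _ g) conjMg conjgKV.
by rewrite inE -conjMg !is_kcycleJ => /andP.
Qed.

(* For a k-cycle s, [s, t] = (s^-1) ^ t * s; counting the t for which this is
   a 3-cycle reduces, by conjugation, to counting good 3-cycles for the
   standard k-cycle. *)
Lemma card_commf_3cycle k s : is_kcycle k s ->
  #|[set t | is_kcycle 3 (commf s t)]| =
  (#|'C[s]| * #|good_cyc3 k (stdcycle n k)|)%N.
Proof.
move=> ks; have /andP[k_gt1 k_le_n] := kcycle_bounds ks.
have ksV : is_kcycle k s^-1 by rewrite is_kcycleV.
have -> : [set t | is_kcycle 3 (commf s t)] = [set t | is_kcycle 3 (s^-1 ^ t * s)].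
  by apply/setP => t; rewrite !inE /commf conjgE !mulgA.
rewrite (card_conj_preimage s^-1 (fun v => is_kcycle 3 (v * s))) cent1V.
rewrite (kcycle_class ksV); congr (_ * _)%N.
have [g sgV] := kcycle_conj_std k_gt1 k_le_n ksV.
rewrite -(card_good_cyc3J k _ g) sgV -(card_imset _ (mulIg s^-1)).
apply: eq_card => v; rewrite !inE; apply/andP/imsetP => [[kv v3]|[c]].
  by exists (v * s); rewrite ?mulgK // inE mulgK v3.
by rewrite inE => /andP[c3 ck] ->; rewrite mulgKV.
Qed.

(* Summing over all k-cycles: each class member contributes its centralizer. *)
Lemma sum_commf_3cycle k : 1 < k <= n ->
  (\sum_(s in kcycles k) #|[set t | is_kcycle 3 (commf s t)]|)%N =
  (n`! * #|good_cyc3 k (stdcycle n k)|)%N.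
Proof.
case/andP=> k_gt1 k_le_n.
rewrite (eq_bigr (fun s => #|'C[s]| * #|good_cyc3 k (stdcycle n k)|)%N); last first.
  by move=> s; rewrite inE; exact: card_commf_3cycle.
by rewrite -big_distrl /= -(kcycle_class (stdcycle_kcycle k_gt1 k_le_n)) sum_cent_class.
Qed.

End ConjugacyCounting.

Local Close Scope group_scope.

Lemma sum_binom3 m : \sum_(0 <= k < m.+1) 'C(k, 3) = 'C(m.+1, 4).
Proof. by elim: m => [|m IH]; rewrite ?big_nat1 // big_nat_recr //= IH. Qed.

Lemma sum_weighted m : \sum_(0 <= k < m.+1) (m - k) * k = 'C(m.+1, 3).
Proof.
elim: m => [|m IH]; first by rewrite big_nat1.
rewrite big_nat_recr //= subnn mul0n addn0 binS -IH -bin2_sum -big_split /=.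
by apply: eq_big_nat => k /andP[_ km]; rewrite subSn // mulSn addnC.
Qed.

(* The number of pairs (s, t) in B2 m with s a k-cycle, divided by m!. *)
Definition contribution (m k : nat) : nat :=
  if 1 < k then 'C(k, 3) + (m - k) * k else 0.

Lemma sum_contributions m :
  24 * \sum_(0 <= k < m.+1) contribution m k =
  (m - 1) * (m - 2) * (m ^ 2 + 5 * m + 12).
Proof.
case: m => [|m]; first by rewrite big_nat1.
have drop01 (F : nat -> nat) :
    \sum_(0 <= k < m.+2) F k = F 0 + F 1 + \sum_(2 <= k < m.+2) F k.
  by rewrite big_ltn // big_ltn // addnA.
have total : \sum_(0 <= k < m.+2) ('C(k, 3) + (m.+1 - k) * k) = 'C(m.+3, 4).
  by rewrite big_split /= sum_binom3 sum_weighted.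
rewrite drop01 /= in total; rewrite drop01.
have -> : \sum_(2 <= k < m.+2) contribution m.+1 k =
          \sum_(2 <= k < m.+2) ('C(k, 3) + (m.+1 - k) * k).
  by apply: eq_big_nat => k /andP[k2 _]; rewrite /contribution ifT.
rewrite /contribution /=.
have := bin_ffact m.+3 4; rewrite !ffactnS ffactn0 /= => f4.
rewrite (@bin_small 0) // (@bin_small 1) // in total; move: total f4.
set T := \sum_(2 <= _ < _) _; set C := 'C(_, _); have -> : 4`! = 24 by [].
by move=> *; nia.
Qed.

Section Assembly.
Variable n : nat.
Local Notation F s := #|[set t : 'S_n | is_kcycle 3 (commf s t)]|.

Lemma card_B2_sum : #|B2 n| = \sum_(s | is_cycle s) F s.
Proof.
rewrite -sum1_card big_mkcond /=.
transitivity (\sum_(s : 'S_n) \sum_(t : 'S_n) (if (s, t) \in B2 n then 1 else 0)).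
  by rewrite pair_big /=; apply: eq_bigr => -[s t].
rewrite [RHS]big_mkcond /=; apply: eq_bigr => s _.
case: ifP => cs; last by apply: big1 => t _; rewrite inE /= cs andbF.
by rewrite -sum1_card [RHS]big_mkcond /=; apply: eq_bigr => t _; rewrite !inE /= cs andbT.
Qed.

Lemma sum_cycles_by_length :
  \sum_(s | is_cycle s) F s = \sum_(k < n.+1) \sum_(s in kcycles n k) F s.
Proof.
rewrite (partition_big (fun s : 'S_n => inord #|psupp s| : 'I_n.+1) xpredT) //=.
apply: eq_bigr => k _; apply: eq_bigl => s; rewrite inE /is_kcycle.
case: (is_cycle s) => //=; rewrite -val_eqE /= inordK // ltnS.
by apply: leq_trans (max_card _) _; rewrite card_ord.
Qed.

Lemma sum_kcycles k : k <= n ->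
  \sum_(s in kcycles n k) F s = n`! * contribution n k.
Proof.
rewrite /contribution => k_le_n; case: ifP => k_gt1.
  by rewrite sum_commf_3cycle ?k_gt1 // card_good_cyc3.
rewrite muln0; apply: big_pred0 => s; rewrite inE.
by apply/negP => /kcycle_bounds; rewrite k_gt1.
Qed.

End Assembly.

Theorem mainTheorem9 (n : nat) (hn : 2 < n) :
  24 * #|B2 n| = (n - 1) * (n - 2) * (n ^ 2 + 5 * n + 12) * n`!.
Proof.
rewrite card_B2_sum sum_cycles_by_length.
rewrite (eq_bigr _ (fun (k : 'I_n.+1) _ => @sum_kcycles n k (ltn_ord k))).
rewrite -big_distrr /= -(big_mkord (fun _ => true) (contribution n)).
by rewrite mulnCA sum_contributions mulnC.
Qed.
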